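(* Consider $\mathrm{USD}_p$ with $p\in[0,1]$ and let $\xi>0$ be a constant. Let $\Phi_{up}(t) := u(t) - x_1(t) - x_2(t)$ and $T_u := \inf\{t \geq 0 : \Phi_{up}(t) > 6\xi\sqrt{n\log n}\}$. Let $\mathbf{x}(0)$ be an arbitrary configuration with $\Phi_{up}(0) < 2\xi\sqrt{n\log n}$. Then with high probability $T_u = \omega(n\log^2 n)$.
   Context: Population protocol with $n$ agents, each in a state from $\{1,2,\bot\}$ (Opinion 1, Opinion 2, undecided). At each time step a scheduler picks an ordered pair $(i,j)$ of agents uniformly at random, independently of the past; only the initiator $i$ changes state. In $\mathrm{USD}_p$: if the initiator is $2$ and the responder $1$, the initiator becomes $\bot$; if the initiator is $1$ and the responder $2$, the initiator becomes $\bot$ with probability $1-p$ and otherwise stays $1$; if the initiator is $\bot$, it adopts the responder's state; otherwise nothing changes. $x_1(t),x_2(t),u(t)$ are the numbers of agents in states $1,2,\bot$ after $t$ interactions. ''With high probability'' means with probability at least $1-n^{-c}$ for a constant $c>0$. *)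

From HB Require Import structures.
From mathcomp Require Import all_boot all_order all_algebra.
From mathcomp Require Import reals exp.
Set Implicit Arguments. Unset Strict Implicit. Unset Printing Implicit Defensive.
Import Order.TTheory GRing.Theory Num.Theory.
Local Open Scope ring_scope.

(* Agent states: Some true = opinion 1, Some false = opinion 2, None = undecided (bot). *)
Notation state := (option bool).
Definition Op1 : state := Some true.
Definition Op2 : state := Some false.
Definition Und : state := None.

Notation config n := {ffun 'I_n -> state}.

Definition cnt (n : nat) (c : config n) (s : state) : nat := #|[set i | c i == s]|.

(* USD_p rule: probability that an initiator in state a interacting with a
   responder in state b moves to state a'. *)
Definition rule_prob (R : realType) (p : R) (a b a' : state) : R :=
  if (a == Op2) && (b == Op1) then (a' == Und)%:R
  else if (a == Op1) && (b == Op2) then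
    (if a' == Und then 1 - p else if a' == Op1 then p else 0)
  else if a == Und then (a' == b)%:R
  else (a' == a)%:R.

Definition trans (R : realType) (p : R) (n : nat) (c c' : config n) : R :=
  \sum_(i : 'I_n) \sum_(j : 'I_n | j != i)
     ((n * n.-1)%:R)^-1 * rule_prob p (c i) (c j) (c' i)
       * ([forall k, (k != i) ==> (c' k == c k)])%:R.

Definition Phi_up (R : realType) (n : nat) (c : config n) : R :=
  (cnt c Und)%:R - (cnt c Op1)%:R - (cnt c Op2)%:R.

(* hit_prob p B t c = P( exists s <= t, X(s) \in B | X(0) = c ) for the
   Markov chain with kernel trans p; i.e. P(T_B <= t) where T_B is the
   hitting time of B. *)
Fixpoint hit_prob (R : realType) (p : R) (n : nat) (B : pred (config n))
    (t : nat) (c : config n) {struct t} : R :=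
  if B c then 1 else
  match t with
  | 0 => 0
  | t'.+1 => \sum_(c' : config n) trans p c c' * hit_prob p B t' c'
  end.

Definition up_set (R : realType) (xi : R) (n : nat) : pred (config n) :=
  fun c => 6 * xi * Num.sqrt (n%:R * ln (n%:R : R)) < Phi_up R c.
Arguments up_set {R} xi n.
Arguments hit_prob {R} p {n} B t c.

(* The potential V = 2^(u - b), with b = n/2 + 3 xi sqrt(n ln n), does not grow in
   expectation while u >= n/2: an interaction 2-1 or 1-2 at most doubles it, which
   happens at rate 2 x1 x2, while an undecided initiator adopting an opinion halves
   it, at rate u (x1 + x2), and 2 x1 x2 <= (x1 + x2)^2 / 2 <= u (x1 + x2) / 2.
   When u < n/2 the potential at most doubles but is below 2^(-3 xi sqrt(n ln n)).
   Since V >= 1 once Phi_up > 6 xi sqrt(n ln n) and V(x(0)) <= 2^(-2 xi sqrt(n ln n)),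
   Markov's inequality for the stopped potential gives
   P(T_u <= t) <= (1 + t) 2^(-2 xi sqrt(n ln n)), far below 1/n for t = O(n ln^2 n). *)

From mathcomp Require Import all_boot all_order all_algebra.
From mathcomp Require Import reals sequences exp.
From mathcomp Require Import ring lra.
Set Implicit Arguments. Unset Strict Implicit. Unset Printing Implicit Defensive.
Import Order.TTheory GRing.Theory Num.Theory.
Local Open Scope ring_scope.

Lemma sum_state (R : realType) (F : state -> R) :
  \sum_s F s = F Und + F Op1 + F Op2.
Proof.
rewrite (bigD1 Und) //= (bigD1 Op1) //= (bigD1 Op2) //= big1 ?addr0 ?addrA //.
by case=> [[]|].
Qed.

Section Counts.
Variables (R : realType) (n : nat) (c : config n).

Lemma cntE s : (cnt c s)%:R = \sum_i ((c i == s)%:R : R).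
Proof.
rewrite /cnt -sum1_card big_mkcond natr_sum; apply: eq_bigr => i _.
by rewrite inE; case: (c i == s).
Qed.

Lemma cnt_sum : (cnt c Und)%:R + (cnt c Op1)%:R + (cnt c Op2)%:R = n%:R :> R.
Proof.
have -> : n%:R = \sum_(i < n) (1 : R) by rewrite sumr_const card_ord.
rewrite !cntE -!big_split /=; apply: eq_bigr => i _.
by case: (c i) => [[]|]; rewrite /= ?addr0 ?add0r.
Qed.

Lemma Phi_upE : Phi_up R c = 2 * (cnt c Und)%:R - n%:R.
Proof. rewrite /Phi_up -cnt_sum; ring. Qed.

Lemma sum_pairs_cnt a b : a != b ->
  \sum_i \sum_(j | j != i) ((c i == a)%:R * (c j == b)%:R : R) =
  (cnt c a)%:R * (cnt c b)%:R.
Proof.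
move=> ab; rewrite !cntE mulr_suml; apply: eq_bigr => i _.
rewrite -mulr_sumr [in RHS](bigD1 i) //= mulrDr.
by case: eqP => [->|_]; rewrite ?(negbTE ab) ?mulr0 ?mul0r ?add0r.
Qed.

End Counts.

Section PairAverage.
Variables (R : realType) (n : nat).

Definition pair_avg (F : 'I_n -> 'I_n -> R) : R :=
  ((n * n.-1)%:R)^-1 * \sum_i \sum_(j | j != i) F i j.

Lemma pair_avg_cst (a : R) : (1 < n)%N -> pair_avg (fun _ _ => a) = a.
Proof.
move=> n_gt1; rewrite /pair_avg.
have -> : \sum_(i < n) \sum_(j | j != i) a = (n * n.-1)%:R * a.
  under eq_bigr => i _ do
    rewrite -[\sum_(j | j != i) a]/(\sum_(j in predC1 i) a) sumr_const cardC1 card_ord.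
  by rewrite sumr_const card_ord -mulrnA mulr_natl mulnC.
by rewrite mulKf // pnatr_eq0 muln_eq0 negb_or -!lt0n ltn_predRL n_gt1 ltnW.
Qed.

Lemma eq_pair_avg (F G : 'I_n -> 'I_n -> R) :
  (forall i j, F i j = G i j) -> pair_avg F = pair_avg G.
Proof.
by move=> FG; rewrite /pair_avg; congr (_ * _); apply: eq_bigr => i _; apply: eq_bigr.
Qed.

Lemma ler_pair_avg (F G : 'I_n -> 'I_n -> R) :
  (forall i j, F i j <= G i j) -> pair_avg F <= pair_avg G.
Proof.
move=> FG; rewrite /pair_avg ler_wpM2l ?invr_ge0 ?ler0n //.
by apply: ler_sum => i _; apply: ler_sum => j _.
Qed.

Lemma pair_avgZ (a : R) (F : 'I_n -> 'I_n -> R) :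
  pair_avg (fun i j => a * F i j) = a * pair_avg F.
Proof.
rewrite /pair_avg mulrCA; congr (_ * _); rewrite mulr_sumr.
by apply: eq_bigr => i _; rewrite mulr_sumr.
Qed.

Lemma pair_avgD (F G : 'I_n -> 'I_n -> R) :
  pair_avg (fun i j => F i j + G i j) = pair_avg F + pair_avg G.
Proof.
rewrite /pair_avg -mulrDr -big_split /=; congr (_ * _).
by apply: eq_bigr => i _; rewrite big_split.
Qed.

End PairAverage.

Definition upd n (c : config n) (i : 'I_n) (s : state) : config n :=
  [ffun k => if k == i then s else c k].

Section Transitions.
Variables (R : realType) (p : R) (n : nat).
Hypothesis p01 : 0 <= p <= 1.

Lemma cnt_upd_Und (c : config n) i s :
  (cnt (upd c i s) Und)%:R = (cnt c Und)%:R - (c i == Und)%:R + (s == Und)%:R :> R.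
Proof.
rewrite !cntE (bigD1 i) //= [in RHS](bigD1 i) //= ffunE eqxx.
rewrite (eq_bigr (fun k => (c k == Und)%:R)); first ring.
by move=> k /negbTE kNi; rewrite ffunE kNi.
Qed.

Lemma agree_outside_upd (c c' : config n) i :
  ([forall k, (k != i) ==> (c' k == c k)])%:R = \sum_s ((c' == upd c i s)%:R : R).
Proof.
have updE s : (c' == upd c i s) = (s == c' i) && [forall k, (k != i) ==> (c' k == c k)].
  apply/eqP/andP => [-> | [/eqP-> /forallP agree]].
    rewrite ffunE eqxx; split=> //; apply/forallP => k.
    by rewrite ffunE; case: (k =P i) => //= _; rewrite eqxx.
  apply/ffunP => k; rewrite ffunE; case: eqP => [->//|/eqP kNi].
  exact/eqP/(implyP (agree k)).
under eq_bigr do rewrite updE -mulnb natrM.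
by rewrite -mulr_suml (bigD1 (c' i)) //= eqxx big1 ?addr0 ?mul1r // => s /negbTE->.
Qed.

Lemma expect_trans (c : config n) (F : config n -> R) :
  \sum_c' trans p c c' * F c' =
  pair_avg (fun i j => \sum_s rule_prob p (c i) (c j) s * F (upd c i s)).
Proof.
rewrite /pair_avg mulr_sumr; under [RHS]eq_bigr do rewrite mulr_sumr.
rewrite /trans; under [LHS]eq_bigr do rewrite mulr_suml; rewrite exchange_big /=.
apply: eq_bigr => i _; under eq_bigr do rewrite mulr_suml; rewrite exchange_big /=.
apply: eq_bigr => j _; rewrite mulr_sumr.
under eq_bigr do rewrite agree_outside_upd mulr_sumr mulr_suml; rewrite exchange_big /=.
apply: eq_bigr => s _; rewrite (bigD1 (upd c i s)) //= big1 ?addr0 => [|c' /negbTE->].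
  by rewrite eqxx ffunE eqxx mulr1 mulrA.
by rewrite mulr0 mul0r.
Qed.

Lemma sum_rule_prob a b : \sum_s rule_prob p a b s = 1.
Proof. by rewrite sum_state /rule_prob; case: a => [[]|]; case: b => [[]|] /=; ring. Qed.

Lemma rule_prob_ge0 a b s : 0 <= rule_prob p a b s.
Proof.
case/andP: p01 => p0 p1; rewrite /rule_prob.
by case: a => [[]|]; case: b => [[]|]; case: s => [[]|] //=; lra.
Qed.

Lemma trans_ge0 (c c' : config n) : 0 <= trans p c c'.
Proof.
apply: sumr_ge0 => i _; apply: sumr_ge0 => j _.
by rewrite !mulr_ge0 ?invr_ge0 ?ler0n ?rule_prob_ge0.
Qed.

Lemma sum_trans (c : config n) : (1 < n)%N -> \sum_c' trans p c c' = 1.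
Proof.
move=> n_gt1; transitivity (\sum_c' trans p c c' * 1).
  by apply: eq_bigr => c' _; rewrite mulr1.
rewrite expect_trans -[RHS](pair_avg_cst 1 n_gt1); apply: eq_pair_avg => i j /=.
by under eq_bigr do rewrite mulr1; exact: sum_rule_prob.
Qed.

End Transitions.

Lemma hit_prob_le_drift (R : realType) (p : R) n (B : pred (config n))
    (f : config n -> R) (eps : R) :
  0 <= p <= 1 -> (1 < n)%N -> 0 <= eps -> (forall c, 0 <= f c) ->
  (forall c, \sum_c' trans p c c' * f c' <= f c + eps) ->
  (forall c, B c -> 1 <= f c) ->
  forall t c, hit_prob p B t c <= f c + t%:R * eps.
Proof.
move=> p01 n_gt1 eps_ge0 f_ge0 drift f_ge1 t; elim: t => [|t IHt] c /=.
  by rewrite mul0r addr0; case: ifP => [/f_ge1|].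
case: ifP => [/f_ge1 f_ge1c|_]; first by rewrite (le_trans f_ge1c) // lerDl mulr_ge0.
apply: le_trans (_ : \sum_c' trans p c c' * (f c' + t%:R * eps) <= _).
  by apply: ler_sum => c' _; rewrite ler_wpM2l ?trans_ge0.
under eq_bigr do rewrite mulrDr.
rewrite big_split /= -mulr_suml sum_trans // mul1r mulrSr mulrDl mul1r addrA addrAC lerD2r.
exact: drift.
Qed.

Section UndecidedPotential.
Variables (R : realType) (p : R) (n : nat).
Hypothesis p01 : 0 <= p <= 1.

Definition und_potential (b : R) (c : config n) : R :=
  expR (ln 2 * ((cnt c Und)%:R - b)).

Definition und_weight (a s : state) : R :=
  if s == Und then (if a == Und then 1 else 2) else (if a == Und then 2^-1 else 1).

Definition growth (a b : state) : R := \sum_s rule_prob p a b s * und_weight a s.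

Definition growth_excess (a b : state) : R :=
  (a == Op2)%:R * (b == Op1)%:R + (a == Op1)%:R * (b == Op2)%:R
  - 2^-1 * ((a == Und)%:R * (b == Op1)%:R + (a == Und)%:R * (b == Op2)%:R).

Lemma und_potential_upd b c i s :
  und_potential b (upd c i s) = und_potential b c * und_weight (c i) s.
Proof.
rewrite /und_potential cnt_upd_Und.
have -> : ln 2 * ((cnt c Und)%:R - (c i == Und)%:R + (s == Und)%:R - b) =
          ln 2 * ((cnt c Und)%:R - b) + ln 2 * ((s == Und)%:R - (c i == Und)%:R) by ring.
rewrite expRD /und_weight; congr (_ * _).
by case: (c i) => [[]|]; case: s => [[]|];
  rewrite /= ?subrr ?subr0 ?sub0r ?mulr0 ?mulr1 ?mulrN1 ?expR0 ?expRN ?lnK ?posrE.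
Qed.

Lemma growth_le2 a b : growth a b <= 2.
Proof.
case/andP: p01 => p0 p1; rewrite /growth sum_state /rule_prob /und_weight.
by case: a => [[]|]; case: b => [[]|] /=; lra.
Qed.

Lemma growth_le_excess a b : growth a b <= 1 + growth_excess a b.
Proof.
case/andP: p01 => p0 p1; rewrite /growth /growth_excess sum_state /rule_prob /und_weight.
by case: a => [[]|]; case: b => [[]|] /=; lra.
Qed.

Lemma sum_pairs_growth_excess (c : config n) :
  \sum_i \sum_(j | j != i) growth_excess (c i) (c j) =
  (cnt c Op2)%:R * (cnt c Op1)%:R + (cnt c Op1)%:R * (cnt c Op2)%:R
  - 2^-1 * ((cnt c Und)%:R * (cnt c Op1)%:R + (cnt c Und)%:R * (cnt c Op2)%:R).
Proof.
rewrite -!sum_pairs_cnt // /growth_excess.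
under eq_bigr do rewrite sumrB -mulr_sumr !big_split /=.
by rewrite sumrB -mulr_sumr !big_split.
Qed.

Lemma expect_und_potential b (c : config n) :
  \sum_c' trans p c c' * und_potential b c' =
  und_potential b c * pair_avg (fun i j => growth (c i) (c j)).
Proof.
rewrite expect_trans -pair_avgZ; apply: eq_pair_avg => i j.
rewrite /growth mulr_sumr; apply: eq_bigr => s _.
by rewrite und_potential_upd mulrCA.
Qed.

Lemma und_potential_supermartingale b (c : config n) :
  (1 < n)%N -> n%:R <= 2 * (cnt c Und)%:R :> R ->
  \sum_c' trans p c c' * und_potential b c' <= und_potential b c.
Proof.
move=> n_gt1 u_ge_half; rewrite expect_und_potential ler_piMr ?expR_ge0 //.
apply: le_trans (ler_pair_avg (fun i j => growth_le_excess (c i) (c j))) _.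
rewrite pair_avgD pair_avg_cst // gerDl /pair_avg sum_pairs_growth_excess.
rewrite mulr_ge0_le0 ?invr_ge0 ?ler0n //.
have := cnt_sum R c; have := ler0n R (cnt c Op1); have := ler0n R (cnt c Op2).
move: u_ge_half; set u := (cnt c Und)%:R; set x1 := (cnt c Op1)%:R; set x2 := (cnt c Op2)%:R.
move=> u_ge_half x2_ge0 x1_ge0 n_eq.
have x12_le_u : x1 + x2 <= u by lra.
have : (x1 + x2) * (x1 + x2) <= u * (x1 + x2) by rewrite ler_wpM2r ?addr_ge0.
have := sqr_ge0 (x1 - x2); rewrite expr2; lra.
Qed.

Lemma und_potential_drift b (c : config n) : (1 < n)%N ->
  \sum_c' trans p c c' * und_potential b c' <=
  und_potential b c + expR (ln 2 * (n%:R / 2 - b)).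
Proof.
move=> n_gt1; have [u_ge_half | u_lt_half] := leP (n%:R : R) (2 * (cnt c Und)%:R).
  by rewrite (le_trans (und_potential_supermartingale _ _ _)) ?lerDl ?expR_ge0.
rewrite expect_und_potential.
apply: le_trans (_ : und_potential b c * pair_avg (fun _ _ => 2) <= _).
  by rewrite ler_wpM2l ?expR_ge0 //; apply: ler_pair_avg => i j; apply: growth_le2.
rewrite pair_avg_cst // mulr_natr mulr2n lerD2l /und_potential ler_expR.
by rewrite ler_pM2l ?ln_gt0 ?ltr1n //; lra.
Qed.

End UndecidedPotential.

Section UndecidedThreshold.
Variables (R : realType) (p : R) (n : nat) (y : R).
Hypothesis p01 : 0 <= p <= 1.

Lemma up_und_potential_ge1 (c : config n) :
  6 * y < Phi_up R c -> 1 <= und_potential (n%:R / 2 + 3 * y) c.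
Proof.
rewrite Phi_upE => Phi_gt; apply: le_trans (expR_ge1Dx _).
by rewrite lerDl mulr_ge0 ?ln_ge0 ?ler1n //; lra.
Qed.

Lemma low_und_potential_le (c : config n) :
  Phi_up R c < 2 * y -> und_potential (n%:R / 2 + 3 * y) c <= expR (- (2 * ln 2 * y)).
Proof.
rewrite Phi_upE => Phi_lt; rewrite ler_expR.
have -> : - (2 * ln 2 * y) = ln 2 * (- (2 * y)) by ring.
by rewrite ler_wpM2l ?ln_ge0 ?ler1n //; lra.
Qed.

Lemma hit_prob_Phi_up_le (B : pred (config n)) t (x0 : config n) :
  (1 < n)%N -> 0 <= y -> (forall c, B c -> 6 * y < Phi_up R c) -> Phi_up R x0 < 2 * y ->
  hit_prob p B t x0 <= (1 + t%:R) * expR (- (2 * ln 2 * y)).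
Proof.
move=> n_gt1 y_ge0 B_up Phi0; set b := n%:R / 2 + 3 * y.
have eps_le : expR (ln 2 * (n%:R / 2 - b)) <= expR (- (2 * ln 2 * y)).
  by rewrite ler_expR /b; have := ln_ge0 (ler1n R 2); nra.
apply: le_trans (hit_prob_le_drift p01 n_gt1 (expR_ge0 _) (fun=> expR_ge0 _)
  (fun c => und_potential_drift p01 b c n_gt1)
  (fun c Bc => up_und_potential_ge1 (B_up c Bc)) t x0) _.
by rewrite mulrDl mul1r lerD ?low_und_potential_le // ler_wpM2l ?ler0n.
Qed.

End UndecidedThreshold.

Lemma sqr_ln_le (R : realType) (x : R) : 1 <= x -> ln x ^+ 2 <= 4 * x.
Proof.
move=> x_ge1; have L_ge0 : 0 <= ln x / 2 by rewrite divr_ge0 ?ln_ge0.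
have sqr_half : expR (ln x / 2) ^+ 2 = x.
  by rewrite expr2 -expRD -splitr lnK ?posrE ?(lt_le_trans ltr01).
have : ln x / 2 <= expR (ln x / 2) by rewrite (le_trans _ (expR_ge1Dx _)) ?lerDr.
move/(lerXn2r 2); rewrite !nnegrE L_ge0 expR_ge0 sqr_half => /(_ isT isT).
by rewrite expr_div_n; lra.
Qed.

Lemma mul_ln_le_sqrt (R : realType) (a b x : R) :
  0 <= a -> 0 <= b -> 1 <= x -> 4 * a ^+ 2 <= b ^+ 2 * ln x ->
  a * ln x <= b * Num.sqrt (x * ln x).
Proof.
move=> a_ge0 b_ge0 x_ge1 ab_le; have L_ge0 : 0 <= ln x by rewrite ln_ge0.
have xL_ge0 : 0 <= x * ln x by rewrite mulr_ge0 // (le_trans ler01).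
rewrite -(@ler_pXn2r _ 2) ?nnegrE ?mulr_ge0 ?sqrtr_ge0 //.
rewrite !exprMn sqr_sqrtr //.
have aL_le : a ^+ 2 * ln x <= b ^+ 2 * x.
  have : b ^+ 2 * ln x ^+ 2 <= b ^+ 2 * (4 * x) by rewrite ler_wpM2l ?sqr_ge0 ?sqr_ln_le.
  have : 4 * a ^+ 2 * ln x <= b ^+ 2 * ln x * ln x by rewrite ler_wpM2r.
  rewrite expr2; lra.
by rewrite [ln x ^+ 2]expr2 mulrA mulrA ler_wpM2r // mulrA.
Qed.

Lemma polylog_expR_sqrt_le_inv (R : realType) (K B x : R) :
  0 <= K -> 0 <= B -> 1 <= x -> 1 <= ln x ->
  4 * (ln (4 * (1 + K)) + 3) ^+ 2 <= B ^+ 2 * ln x ->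
  (1 + K * x * ln x ^+ 2) * expR (- (B * Num.sqrt (x * ln x))) <= x^-1.
Proof.
move=> K_ge0 B_ge0 x_ge1 L_ge1 AB_le.
set L := ln x in L_ge1 AB_le *; set c := ln (4 * (1 + K)) in AB_le *.
have x_gt0 : 0 < x by rewrite (lt_le_trans ltr01).
have c_ge0 : 0 <= c by rewrite ln_ge0 //; lra.
have poly_le : (1 + K * x * L ^+ 2) * x <= 4 * (1 + K) * x ^+ 3.
  have xL_ge1 : 1 <= x * L ^+ 2 by rewrite mulr_ege1 ?exprn_ege1.
  have xL_le : x * L ^+ 2 <= x * (4 * x) by rewrite ler_wpM2l ?(ltW x_gt0) ?sqr_ln_le.
  have : 0 <= K * (4 * x * x - x * L ^+ 2) by rewrite mulr_ge0 //; lra.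
  rewrite !exprS expr0 mulr1; nra.
have powE : 4 * (1 + K) * x ^+ 3 = expR (c + 3%:R * L).
  by rewrite expRD expRM_natl lnK ?lnK ?posrE //; lra.
have exp_le : (1 + K * x * L ^+ 2) * x <= expR (B * Num.sqrt (x * L)).
  rewrite (le_trans poly_le) // powE ler_expR.
  apply: le_trans (mul_ln_le_sqrt _ B_ge0 x_ge1 AB_le); last by lra.
  have : c <= c * L by rewrite ler_peMr.
  by rewrite -/L; lra.
set P := 1 + K * x * L ^+ 2 in exp_le *; set s := Num.sqrt (x * L) in exp_le *.
have -> : P * expR (- (B * s)) = P * x * expR (- (B * s)) / x.
  by rewrite mulrAC mulfK ?lt0r_neq0.
apply: (@le_trans _ _ (expR (B * s) * expR (- (B * s)) / x)).
  by apply: ler_wpM2r; [rewrite invr_ge0 ltW | apply: ler_wpM2r; rewrite ?expR_ge0].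
by rewrite expRxMexpNx_1 mul1r.
Qed.

Lemma eventually_le_ln_nat (R : realType) (M : R) :
  exists N, forall n, (N <= n)%N -> M <= ln (n%:R : R).
Proof.
exists (Num.Def.truncn (expR M)).+1 => n n_ge.
have expM_lt : expR M < n%:R by rewrite (lt_le_trans (truncnS_gt _)) ?ler_nat.
by rewrite -[M in M <= _]expRK ler_ln ?posrE ?expR_gt0 ?(lt_trans (expR_gt0 M)) ?ltW.
Qed.

Theorem lemma10 (R : realType) (p xi : R) :
  0 <= p <= 1 -> 0 < xi ->
  forall K : R, 0 < K ->
  exists c : R, 0 < c /\
  exists N : nat, forall n : nat, (N <= n)%N ->
  forall x0 : config n,
    Phi_up R x0 < 2 * xi * Num.sqrt (n%:R * ln (n%:R : R)) ->
  forall t : nat, t%:R <= K * n%:R * (ln (n%:R : R)) ^+ 2 ->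
    hit_prob p (up_set xi n) t x0 <= (n%:R : R) `^ (- c).
Proof.
move=> p01 xi_gt0 K K_gt0; exists 1; split=> //.
set B := 2 * ln 2 * xi; set A := ln (4 * (1 + K)) + 3.
have B_gt0 : 0 < B by rewrite !mulr_gt0 ?ln_gt0 ?ltr1n.
have [N ln_ge] := eventually_le_ln_nat (Num.max 1 (4 * A ^+ 2 / B ^+ 2)).
exists N; move=> n /ln_ge; rewrite ge_max => /andP[L_ge1 AB_le] x0 Phi0 t t_le.
have n_gt1 : (1 < n)%N.
  by rewrite ltnNge; apply/negP; rewrite -(ler_nat R) => /ln_le0; lra.
set s := Num.sqrt (n%:R * ln n%:R) in Phi0 *.
have y_ge0 : 0 <= xi * s by rewrite mulr_ge0 ?sqrtr_ge0 ?(ltW xi_gt0).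
have up_gt c : up_set xi n c -> 6 * (xi * s) < Phi_up R c by rewrite /up_set mulrA.
rewrite -mulrA in Phi0.
apply: le_trans (hit_prob_Phi_up_le p01 t n_gt1 y_ge0 up_gt Phi0) _.
have -> : 2 * ln 2 * (xi * s) = B * s by rewrite /B !mulrA.
rewrite powR_inv1 ?ler0n //; apply: le_trans (polylog_expR_sqrt_le_inv (ltW K_gt0)
  (ltW B_gt0) (_ : 1 <= n%:R) L_ge1 _); last 2 first.
- by rewrite ler1n ltnW.
- by rewrite [B ^+ 2 * _]mulrC -ler_pdivrMr ?exprn_gt0.
by rewrite ler_wpM2r ?expR_ge0 // lerD2l.
Qed.
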